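(* Under the standing setting and assumptions (A1)–(A3) described in the context, assume $\mathcal A$ is convex and $\mathrm{int}(\mathcal A^\infty)\cap\mathcal M\neq\emptyset$. Then for every $\varepsilon>0$ the map $\mathcal R_\varepsilon$ is lower semicontinuous at every point of $\mathcal X$.
   Context: Let $\mathcal X$ be a Hausdorff, first countable, locally convex topological vector space over $\mathbb R$, partially ordered by a partial order $\geq$ with positive cone $\mathcal X_+=\{X\in\mathcal X: X\geq 0\}$. Let $\mathcal M\subset\mathcal X$ be a vector subspace with $1<\dim\mathcal M<\infty$, carrying the relative topology, and let $\pi:\mathcal M\to\mathbb R$ be linear. Standing assumptions: (A1) there is $U\in\mathcal M\cap\mathcal X_+$ with $\pi(U)=1$; (A2) $\mathcal A\subsetneq\mathcal X$ is closed, contains $0$, and satisfies $\mathcal A+\mathcal X_+\subset\mathcal A$; (A3) the map $\rho(X)=\inf\{\pi(Z): Z\in\mathcal M,\ X+Z\in\mathcal A\}$ is finitely valued and continuous on $\mathcal X$. For $\varepsilon>0$, $\mathcal R_\varepsilon(X)=\{Z\in\mathcal M: X+Z\in\mathcal A,\ \pi(Z)<\rho(X)+\varepsilon\}$. The asymptotic cone is $\mathcal A^\infty=\bigcap_{\delta>0}\mathrm{cl}\{\lambda X:\lambda\in[0,\delta],X\in\mathcal A\}$; $\mathrm{int}$ denotes interior in $\mathcal X$. A set-valued map $\mathcal S:\mathcal X\rightrightarrows\mathcal M$ is lower semicontinuous at $X$ if for every open $\mathcal U\subset\mathcal M$ with $\mathcal S(X)\cap\mathcal U\neq\emptyset$ there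 is an open neighborhood $\mathcal U_X$ of $X$ with $\mathcal S(Y)\cap\mathcal U\neq\emptyset$ for all $Y\in\mathcal U_X$. *)

From HB Require Import structures.
From mathcomp Require Import all_boot all_order all_algebra.
From mathcomp Require Import all_classical all_reals all_analysis.
Set Implicit Arguments. Unset Strict Implicit. Unset Printing Implicit Defensive.
Import Order.TTheory GRing.Theory Num.Theory numFieldTopology.Exports numFieldNormedType.Exports.
Local Open Scope classical_set_scope.
Local Open Scope ring_scope.

Section Defs.
Context {R : realType} {E : tvsType R}.

Definition first_countable : Prop :=
  forall x : E, exists B : nat -> set E,
    (forall n, nbhs x (B n)) /\ (forall U, nbhs x U -> exists n, B n `<=` U).

Definition vector_partial_order (ge : E -> E -> Prop) : Prop :=
  [/\ (forall x, ge x x),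
      (forall x y, ge x y -> ge y x -> x = y),
      (forall x y z, ge x y -> ge y z -> ge x z),
      (forall x y z, ge x y -> ge (x + z) (y + z)) &
      (forall (a : R) x y, 0 <= a -> ge x y -> ge (a *: x) (a *: y))].

Definition positive_cone (ge : E -> E -> Prop) : set E := [set x | ge x 0].

Definition is_subspace (M : set E) : Prop :=
  [/\ M 0, (forall x y, M x -> M y -> M (x + y)) &
      (forall (a : R) x, M x -> M (a *: x))].

Definition has_dim (M : set E) (n : nat) : Prop :=
  exists e : 'I_n -> E,
    [/\ (forall i, M (e i)),
        (forall c : 'I_n -> R, \sum_(i < n) c i *: e i = 0 -> forall i, c i = 0) &
        (forall x, M x -> exists c : 'I_n -> R, x = \sum_(i < n) c i *: e i)].

Definition linear_on (M : set E) (pi : E -> R) : Prop :=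
  (forall x y, M x -> M y -> pi (x + y) = pi x + pi y) /\
  (forall (a : R) x, M x -> pi (a *: x) = a * pi x).

Definition rho_set (M A : set E) (pi : E -> R) (X : E) : set R :=
  [set pi Z | Z in [set Z | M Z /\ A (X + Z)]].

Definition rho (M A : set E) (pi : E -> R) (X : E) : R := inf (rho_set M A pi X).

Definition Reps (M A : set E) (pi : E -> R) (eps : R) (X : E) : set E :=
  [set Z | [/\ M Z, A (X + Z) & pi Z < rho M A pi X + eps]].

Definition asymptotic_cone (A : set E) : set E :=
  \bigcap_(d in [set d : R | 0 < d])
    closure [set y | exists l a, [/\ 0 <= l <= d, A a & y = l *: a]].

Definition rel_open (M U : set E) : Prop :=
  exists O : set E, open O /\ U = O `&` M.

Definition lsc_at (M : set E) (S : E -> set E) (X : E) : Prop :=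
  forall U : set E, rel_open M U -> U `<=` M -> S X `&` U !=set0 ->
    exists V : set E, [/\ open V, V X &
      forall Y, V Y -> S Y `&` U !=set0].

End Defs.

From HB Require Import structures.
From mathcomp Require Import all_boot all_order all_algebra.
From mathcomp Require Import all_classical all_reals all_analysis.
From mathcomp Require Import lra.
Set Implicit Arguments.
Unset Strict Implicit.
Unset Printing Implicit Defensive.
Import Order.TTheory GRing.Theory Num.Theory numFieldTopology.Exports numFieldNormedType.Exports.
Local Open Scope classical_set_scope.
Local Open Scope ring_scope.

(* Take [Z] in [Reps eps X] and in the open set [U], and [W] in the interior of the
   asymptotic cone of [A] and in [M].  For small [t > 0], [Z + t W] stays in [U] and
   [pi (Z + t W)] stays below [rho X + eps] with a margin.  For [Y] near [X],
   [W + (Y - X) / t] is still in the asymptotic cone, so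
   [Y + (Z + t W) = (X + Z) + t (W + (Y - X) / t)] lies in [A], since a closed convex set
   is stable under translation by its asymptotic cone; continuity of [rho] absorbs the
   margin, so [Z + t W] is in [Reps eps Y]. *)

Section TopologicalLmoduleLimits.
Context {K : numFieldType} {V : topologicalLmodType K}.

Lemma lmod_cvgD T (F : set_system T) {FF : Filter F} (f g : T -> V) (a b : V) :
  f @ F --> a -> g @ F --> b -> (fun x => f x + g x) @ F --> a + b.
Proof.
move=> fa gb.
exact: (continuous_cvg FF (@add_continuous V (a, b)) (cvg_pair fa gb)).
Qed.

Lemma lmod_cvgZ T (F : set_system T) {FF : Filter F} (s : T -> K) (f : T -> V)
    (k : K) (a : V) :
  s @ F --> k -> f @ F --> a -> (fun x => s x *: f x) @ F --> k *: a.
Proof.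
move=> sk fa.
exact: (continuous_cvg FF (@scale_continuous K V (k, a))
  (cvg_pair (sk : (s : T -> K^o) @ F --> k) fa)).
Qed.

Lemma continuous_affine (w x : V) (c : K) :
  continuous (fun y => w + c *: (y - x)).
Proof.
move=> y; apply: lmod_cvgD; first exact: cvg_cst.
apply: lmod_cvgZ; first exact: cvg_cst.
apply: lmod_cvgD; [exact: cvg_id | exact: cvg_cst].
Qed.

End TopologicalLmoduleLimits.

Section RealTvs.
Context {R : realType} {E : tvsType R}.

Lemma exists_small_shift (O : set E) (Z W : E) (p d : R) :
  open O -> O Z -> 0 < d -> exists t, [/\ 0 < t, O (Z + t *: W) & t * p < d].
Proof.
move=> O_open OZ d_gt0.
have shift_cvg : (fun t : R => Z + t *: W) @ 0^'+ --> Z.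
  rewrite -[X in _ --> X]addr0 -(scale0r W).
  apply: cvg_at_right_filter; apply: lmod_cvgD; first exact: cvg_cst.
  exact: lmod_cvgZ cvg_id (cvg_cst _).
have tp_cvg : (fun t : R => t * p) @ 0^'+ --> 0.
  rewrite -[X in _ --> X](mul0r p); apply: cvg_at_right_filter.
  exact: cvgM cvg_id (cvg_cst _).
near (0 : R)^'+ => t.
exists t; split; near: t.
- exact: nbhs_right_gt.
- by apply: shift_cvg; apply: open_nbhs_nbhs.
- exact: cvgr_lt tp_cvg _ d_gt0.
Unshelve. all: by end_near.
Qed.

Lemma closed_convex_asymptotic_addZ (A : set E) (a w : E) (t : R) :
  closed A -> convex_set (A : set (convex_lmodType E)) ->
  A a -> asymptotic_cone A w -> 0 <= t -> A (a + t *: w).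
Proof.
(* [a + t w] is a limit of the points [(1 - t l) a + t (l a')] of [A], with [a' \in A],
   [l -> 0] and [l a' -> w]. *)
move=> cA cvxA Aa Aw; rewrite le_eqVlt => /predU1P[<-|t_gt0].
  by rewrite scale0r addr0.
rewrite (closure_id A).1 // => B Bn.
pose h (z : R * E) := (1 - z.1) *: a + t *: z.2.
have h_cvg : h @ nbhs ((0 : R), w) --> a + t *: w.
  rewrite -[X in X + _]scale1r -[X in X *: a]subr0.
  apply: lmod_cvgD; last exact: lmod_cvgZ (cvg_cst _) cvg_snd.
  exact: lmod_cvgZ (cvgB (cvg_cst _) cvg_fst) (cvg_cst _).
have [[P1 P2] /= [P1_0 P2_w] P1P2_B] := h_cvg B Bn.
have [e /= e_gt0 ballP1] := (nbhs_ballP _ _).1 P1_0.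
set m := Num.min (e / 2) 1.
have m_gt0 : 0 < m by rewrite /m lt_min ltr01 andbT divr_gt0.
have [_ [[l [a' [/andP[l_ge0 l_le] Aa' ->]]] P2la']] :=
  Aw (m / t) (divr_gt0 m_gt0 t_gt0) P2 P2_w.
have tl_ge0 : 0 <= t * l by rewrite mulr_ge0 // ltW.
have tl_le : t * l <= m by rewrite mulrC -ler_pdivlMr.
have tl_le1 : t * l <= 1 by rewrite (le_trans tl_le) // ge_min lexx orbT.
have tl_lte : t * l < e.
  by rewrite (le_lt_trans tl_le) // gt_min ltr_pdivrMr // ltr_pMr // ltr1n.
exists (h (t * l, l *: a')); split.
- have := cvxA a' a (Itv01 tl_ge0 tl_le1) (mem_set Aa') (mem_set Aa).
  move/set_mem; congr A.
  by rewrite /h /= /conv /= /unstable.onem scalerA addrC.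
- apply: P1P2_B; split => //=; apply: ballP1.
  by rewrite -ball_normE /ball_ /= sub0r normrN ger0_norm.
Qed.

End RealTvs.

Section RepsLowerSemicontinuity.
Context {R : realType} {E : tvsType R}.
Variables (M A : set E) (pi : E -> R).
Hypotheses (M_sub : is_subspace M) (pi_lin : linear_on M pi).
Hypotheses (A_closed : closed A) (A_convex : convex_set (A : set (convex_lmodType E))).

Lemma Reps_translate (eps : R) (X Y Z W : E) (t : R) :
  M Z -> A (X + Z) -> M W -> 0 < t ->
  asymptotic_cone A (W + t^-1 *: (Y - X)) ->
  pi Z + t * pi W < rho M A pi Y + eps ->
  Reps M A pi eps Y (Z + t *: W).
Proof.
case: M_sub => _ MD MZ; case: pi_lin => piD piZ.
move=> MZ0 AXZ MW t_gt0 shift_asym pi_lt.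
split; first by apply: MD => //; apply: MZ.
- have -> : Y + (Z + t *: W) = (X + Z) + t *: (W + t^-1 *: (Y - X)).
    rewrite scalerDr scalerA mulfV ?gt_eqF // scale1r.
    rewrite [in RHS]addrCA [X + Z]addrC -[in RHS](addrA Z) subrKC.
    by rewrite [RHS]addrC [LHS]addrCA addrA.
  exact: closed_convex_asymptotic_addZ (ltW t_gt0).
- by rewrite piD ?piZ //; apply: MZ.
Qed.

Hypothesis rho_cont : continuous (rho M A pi).
Hypothesis asym_interior_meets_M : interior (asymptotic_cone A) `&` M !=set0.

Theorem Reps_lsc (eps : R) (X : E) : 0 < eps -> lsc_at M (Reps M A pi eps) X.
Proof.
have [W [intW MW]] := asym_interior_meets_M.
move=> eps_gt0 U [V [V_open ->]] _ [Z [[MZ AXZ piZ_lt] [VZ _]]].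
set r := rho M A pi.
(* Half of the slack pays for the shift [t W], the other half for the drop of [r] near [X]. *)
pose d := (r X + eps - pi Z) / 2.
have d_gt0 : 0 < d by rewrite divr_gt0 // subr_gt0.
have [t [t_gt0 VZtW tpiW_lt]] := exists_small_shift W (pi W) V_open VZ d_gt0.
pose g Y := W + t^-1 *: (Y - X).
exists (g @^-1` interior (asymptotic_cone A) `&` [set Y | r X - d < r Y]); split.
- apply: openI.
  + apply: open_comp; last exact: open_interior.
    by move=> Y _; apply: continuous_affine.
  + apply: (open_comp (D := [set s | r X - d < s])); last exact: open_gt.
    by move=> Y _; apply: rho_cont.
- by split; rewrite /g /= ?subrr ?scaler0 ?addr0 // ltrBlDr ltrDl.
- move=> Y [/interior_subset gY rY].
  have RY : Reps M A pi eps Y (Z + t *: W).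
    apply: (Reps_translate MZ AXZ MW t_gt0 gY).
    rewrite /d /= in rY tpiW_lt; lra.
  by exists (Z + t *: W); split=> //; split=> //; case: RY.
Qed.

End RepsLowerSemicontinuity.

Theorem mainTheorem20 (R : realType) (E : tvsType R)
    (ge : E -> E -> Prop) (M : set E) (pi : E -> R) (A : set E) :
  hausdorff_space E ->
  first_countable (E := E) ->
  vector_partial_order ge ->
  is_subspace M ->
  (exists n : nat, (1 < n)%N /\ has_dim M n) ->
  linear_on M pi ->
  (* (A1) *)
  (exists U : E, [/\ M U, positive_cone ge U & pi U = 1]) ->
  (* (A2) *)
  closed A -> A 0 -> A <> setT ->
  (forall a p, A a -> positive_cone ge p -> A (a + p)) ->
  (* (A3) *)
  (forall X, rho_set M A pi X !=set0 /\ has_lbound (rho_set M A pi X)) ->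
  continuous (rho M A pi) ->
  (* additional hypotheses *)
  convex_set (A : set (convex_lmodType E)) ->
  interior (asymptotic_cone A) `&` M !=set0 ->
  forall eps : R, 0 < eps -> forall X : E, lsc_at M (Reps M A pi eps) X.
Proof.
move=> _ _ _ M_sub _ pi_lin _ A_closed _ _ _ _ rho_cont A_convex asym_M eps eps_gt0 X.
exact: (Reps_lsc M_sub pi_lin A_closed A_convex rho_cont asym_M eps_gt0).
Qed.
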